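(* Let $\mathbb{F}$ be a finite field of size $q$ and $s,d,t$ positive integers with $s-dt>0$. For every positive integer $j$ with $$ j\ \ge\ \begin{cases}\log_q(s-1) & \text{if } q^j \text{ is odd, or } (s-dt)\notin\{3,q^j-1\},\\ \log_q(s-2) & \text{if } q^j \text{ is even and } (s-dt)\in\{3,q^j-1\},\end{cases}$$ there is an explicit block totally nonsingular array $\mathbf{A}\in\mathrm{GL}(\mathbb{F},j)^{(s-dt)\times dt}$.
   Context: $\mathrm{GL}(\mathbb{F},j)$ is the set of invertible $j\times j$ matrices over $\mathbb{F}$. An $r\times u$ block array $\mathbf{A}=[A_{i,k}]$ with each $A_{i,k}\in\mathrm{GL}(\mathbb{F},j)$ is block totally nonsingular if for all $S\subseteq[r]$, $S'\subseteq[u]$ with $|S|=|S'|$, the $j|S|\times j|S'|$ matrix $[A_{i,k}]_{i\in S,k\in S'}$ is nonsingular. *)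

From HB Require Import structures.
From mathcomp Require Import all_boot all_order all_algebra.
Set Implicit Arguments. Unset Strict Implicit. Unset Printing Implicit Defensive.
Import GRing.Theory.
Local Open Scope ring_scope.

Definition block_array (F : fieldType) (r u j : nat) := 'I_r -> 'I_u -> 'M[F]_j.

Definition blocks_in_GL (F : fieldType) (r u j : nat) (A : block_array F r u j) : Prop :=
  forall i k, A i k \in unitmx.

(* The (j|S|) x (j|S'|) matrix [A_{i,k}]_{i in S, k in S'}; rows/columns of
   blocks are taken in increasing order of the indices in S, S'.  Row index
   of the big matrix is a pair (block row a, inner row b). *)
Definition block_sub (F : fieldType) (r u j : nat) (A : block_array F r u j)
  (S : {set 'I_r}) (S' : {set 'I_u}) : 'M[F]_(#|S| * j, #|S'| * j) :=
  \matrix_(x < #|S| * j, y < #|S'| * j)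
    let p := enum_val (cast_ord (esym (mxvec_cast #|S| j)) x) in
    let q := enum_val (cast_ord (esym (mxvec_cast #|S'| j)) y) in
    A (enum_val p.1) (enum_val q.1) p.2 q.2.

Definition block_totally_nonsingular (F : fieldType) (r u j : nat)
  (A : block_array F r u j) : Prop :=
  forall (S : {set 'I_r}) (S' : {set 'I_u}) (h : #|S'| = #|S|),
    castmx (erefl, congr1 (muln^~ j) h) (block_sub A S S') \in unitmx.

(* Take a totally nonsingular [r x u] array [a] of scalars in the field [K] with
   [q^j] elements and replace each entry by the [j x j] matrix of multiplication
   by it on [K], viewed as a [j]-dimensional vector space over [F].  A kernel
   vector of a block submatrix, read blockwise as elements of [K], is then a
   kernel vector of the corresponding submatrix of [a], so it vanishes.  For [a]
   one takes a Cauchy matrix [1 / (y_k - x_i)] on [r + u <= q^j + 1] distinct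
   points of the projective line over [K].  In characteristic 2 the three-row
   array [y_k ^ i] ([i < 3], [y_k <> 0] distinct) is also totally nonsingular,
   because [y^2 - y'^2 = (y - y')^2]; it covers the two exceptional shapes
   [r = 3] and [r = q^j - 1, u <= 3] that allow one more point. *)

From HB Require Import structures.
From mathcomp Require Import all_boot all_order all_algebra all_field zify ring.
Set Implicit Arguments. Unset Strict Implicit. Unset Printing Implicit Defensive.
Import GRing.Theory.
Local Open Scope ring_scope.

Lemma unitmx_kerP (F : fieldType) n (M : 'M[F]_n) :
  reflect (forall v : 'rV_n, v *m M = 0 -> v = 0) (M \in unitmx).
Proof.
apply: (iffP idP) => [uM v vM0 | /inj_row_free]; last by rewrite row_free_unit.
by rewrite -(mulmxK uM v) vM0 mul0mx.
Qed.

Section TotallyNonsingular.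
Variable K : fieldType.

Definition totally_nonsingular r u (a : 'I_r -> 'I_u -> K) :=
  forall n (f : 'I_n -> 'I_r) (g : 'I_n -> 'I_u), injective f -> injective g ->
    \matrix_(x, y) a (f x) (g y) \in unitmx.

Lemma totally_nonsingularP r u (a : 'I_r -> 'I_u -> K) :
  totally_nonsingular a <->
  (forall n (f : 'I_n -> 'I_r) (g : 'I_n -> 'I_u), injective f -> injective g ->
    forall v : 'I_n -> K, (forall y, \sum_x v x * a (f x) (g y) = 0) -> forall x, v x = 0).
Proof.
have rowE n (f : 'I_n -> 'I_r) g (v : 'rV_n) y :
    (v *m \matrix_(x, y) a (f x) (g y)) 0 y = \sum_x v 0 x * a (f x) (g y).
  by rewrite mxE; apply: eq_bigr => x _; rewrite mxE.
split=> [tn n f g injf injg v v0 x | ker n f g injf injg].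
  have /unitmx_kerP/(_ (\row_x v x)) := tn n f g injf injg.
  suff /[swap]/[apply]/rowP/(_ x) : (\row_x v x) *m \matrix_(x, y) a (f x) (g y) = 0.
    by rewrite !mxE.
  apply/rowP => y; rewrite rowE [RHS]mxE -[RHS](v0 y).
  by apply: eq_bigr => z _; rewrite mxE.
apply/unitmx_kerP => v /rowP v0; apply/rowP => x; rewrite mxE.
by apply: (ker n f g injf injg (v 0)) => y; rewrite -rowE v0 mxE.
Qed.

Lemma totally_nonsingular_neq0 r u (a : 'I_r -> 'I_u -> K) i k :
  totally_nonsingular a -> a i k != 0.
Proof.
have inj1 (T : Type) (h : 'I_1 -> T) : injective h by move=> x y _; rewrite !ord1.
move=> /(_ 1 (fun=> i) (fun=> k) (inj1 _ _) (inj1 _ _)).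
by rewrite unitmxE det_mx11 mxE unitfE.
Qed.

Lemma totally_nonsingular_tr r u (a : 'I_r -> 'I_u -> K) :
  totally_nonsingular a -> totally_nonsingular (fun k i => a i k).
Proof.
move=> tn n f g injf injg; rewrite -unitmx_tr.
have -> : (\matrix_(x, y) a (g y) (f x))^T = \matrix_(x, y) a (g x) (f y).
  by apply/matrixP => x y; rewrite !mxE.
exact: tn.
Qed.

Lemma totally_nonsingular_comp r u r' u' (a : 'I_r -> 'I_u -> K)
    (h1 : 'I_r' -> 'I_r) (h2 : 'I_u' -> 'I_u) :
  injective h1 -> injective h2 ->
  totally_nonsingular a -> totally_nonsingular (fun i k => a (h1 i) (h2 k)).
Proof.
move=> inj1 inj2 tn n f g injf injg.
exact: (tn n (h1 \o f) (h2 \o g) (inj_comp inj1 injf) (inj_comp inj2 injg)).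
Qed.

End TotallyNonsingular.

Lemma poly_eq0_of_roots (K : fieldType) n (p : {poly K}) (c : 'I_n -> K) :
  injective c -> (size p <= n)%N -> (forall y, root p (c y)) -> p = 0.
Proof.
move=> injc szp pc; apply: (@roots_geq_poly_eq0 _ _ (map c (enum 'I_n))).
- by apply/allP => _ /mapP[y _ ->].
- by rewrite map_inj_uniq ?enum_uniq.
- by rewrite size_map size_enum_ord.
Qed.

Lemma size_lincomb_leq (K : fieldType) (I : finType) (v : I -> K) (p : I -> {poly K}) n :
  (forall i, size (p i) <= n)%N -> (size (\sum_i v i *: p i)%R <= n)%N.
Proof.
move=> szp; apply: leq_trans (size_sum _ _ _) _; apply/bigmax_leqP => i _.
exact: leq_trans (size_scale_leq _ _) (szp i).
Qed.

Section CauchyArray.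
Variables (K : fieldType) (r u : nat) (x : 'I_r -> option K) (y : 'I_u -> K).
Hypotheses (x_inj : injective x) (y_inj : injective y)
  (xy_neq : forall i k, x i != Some (y k)).

(* Rows are points of the projective line, [None] being the point at infinity. *)
Definition cauchy_array i k := if x i is Some c then (y k - c)^-1 else 1.

Section Kernel.
Variables (n : nat) (f : 'I_n -> 'I_r) (g : 'I_n -> 'I_u) (v : 'I_n -> K).
Hypotheses (f_inj : injective f) (g_inj : injective g)
  (v_ker : forall w, \sum_z v z * cauchy_array (f z) (g w) = 0).

Let fin z := x (f z) != None.
Let pt z := odflt 0 (x (f z)).
Let omit z := \prod_(z' | (z' != z) && fin z') ('X - (pt z')%:P).
(* Clearing denominators: [P] evaluated at [y k] is the kernel relation for column [k]
   times [\prod_(z | fin z) (y k - pt z)]. *)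
Let P := \sum_z v z *: omit z.

Let fin_pt z : fin z -> x (f z) = Some (pt z).
Proof. by rewrite /fin /pt; case: (x (f z)). Qed.

Let pt_inj z z' : fin z -> fin z' -> pt z = pt z' -> z = z'.
Proof. by move=> /fin_pt fz /fin_pt fz' e; apply/f_inj/x_inj; rewrite fz fz' e. Qed.

Let omit_at_y z w :
  (omit z).[y (g w)] = \prod_(z' | fin z') (y (g w) - pt z') * cauchy_array (f z) (g w).
Proof.
rewrite /omit /cauchy_array /fin /pt horner_prod.
case Ez: (x (f z)) => [c|] /=; last first.
  rewrite mulr1; apply: eq_big => [z'|z' _]; last by rewrite hornerXsubC.
  by rewrite andb_idl // => fz'; apply: contraTneq fz' => ->; rewrite Ez.
rewrite [in RHS](bigD1 z) /= ?Ez // mulrAC mulfV ?mul1r; last first.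
  by rewrite subr_eq0; apply: contraNneq (xy_neq (f z) (g w)) => ->; rewrite Ez.
by apply: eq_big => [z'|z' _]; rewrite ?hornerXsubC // andbC.
Qed.

Let size_omit z : (size (omit z) <= n)%N.
Proof.
rewrite /omit size_prod => [|z' _]; last by rewrite polyXsubC_eq0.
under eq_bigr do rewrite size_XsubC.
rewrite sum_nat_const.
have : (#|fun z' => (z' != z) && fin z'| <= #|predC1 z|)%N.
  by apply: subset_leq_card; apply/subsetP => z' /andP[].
rewrite cardC1 card_ord -[2%R]/2%N; have := ltn_ord z; set c := #|_|; lia.
Qed.

Let P_eq0 : P = 0.
Proof.
apply: (@poly_eq0_of_roots _ n _ (y \o g)); first exact: inj_comp.
  exact: size_lincomb_leq.
move=> w; rewrite /root /P horner_sum /=.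
under eq_bigr => z _ do rewrite hornerZ omit_at_y mulrCA.
by rewrite -mulr_sumr v_ker mulr0.
Qed.

Let v_fin z : fin z -> v z = 0.
Proof.
move=> fz; have /(congr1 (horner^~ (pt z))) := P_eq0.
rewrite horner0 /P horner_sum (bigD1 z) //= big1 ?addr0 => [|z' z'z].
  rewrite hornerZ /omit horner_prod => /eqP; rewrite mulf_eq0 prodf_seq_eq0.
  case/orP => [/eqP // | /hasP[z' _ /andP[/andP[z'z fz']]]].
  by rewrite hornerXsubC subr_eq0 => /eqP/pt_inj eq_z; rewrite eq_z ?eqxx in z'z.
rewrite hornerZ /omit horner_prod (bigD1 z) /=; last by rewrite eq_sym z'z.
by rewrite hornerXsubC subrr mul0r mulr0.
Qed.

Lemma cauchy_array_ker z : v z = 0.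
Proof.
case fz: (fin z); first exact: v_fin.
have := v_ker z; rewrite (bigD1 z) //= big1 ?addr0 => [|z' z'z].
  by rewrite /cauchy_array; move/negbFE/eqP: fz => ->; rewrite mulr1.
rewrite v_fin ?mul0r //; apply: contraNT z'z => /negbNE/eqP z'_inf.
by apply/eqP/f_inj/x_inj; rewrite z'_inf; move/negbFE/eqP: fz.
Qed.
End Kernel.

Lemma cauchy_array_tn : totally_nonsingular cauchy_array.
Proof. by apply/totally_nonsingularP => n f g f_inj g_inj v; apply: cauchy_array_ker. Qed.

End CauchyArray.

Lemma exists_cauchy_tn (K : finFieldType) r u :
  (0 < r)%N -> (r + u <= #|K|.+1)%N -> exists a : 'I_r -> 'I_u -> K, totally_nonsingular a.
Proof.
move=> r_gt0 ru_le; pose c m := nth 0 (enum K) m.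
have c_inj m m' : (m < #|K|)%N -> (m' < #|K|)%N -> c m = c m' -> m = m'.
  by move=> lt_m lt_m' /eqP; rewrite nth_uniq ?enum_uniq -?cardE // => /eqP.
pose x (i : 'I_r) := if (i : nat) is m.+1 then Some (c m) else None.
pose y (k : 'I_u) := c (r.-1 + k).
have y_lt (k : 'I_u) : (r.-1 + k < #|K|)%N by have := ltn_ord k; lia.
exists (cauchy_array x y); apply: cauchy_array_tn.
- move=> [[|m] lt_m] [[|m'] lt_m'] //= e; apply: val_inj => //=.
  by case: e => /c_inj ->; lia.
- by move=> k k' /c_inj e; apply: ord_inj; have := e (y_lt k) (y_lt k'); lia.
- move=> [[|m] lt_m] k //=; apply/eqP => [[/c_inj]]; rewrite y_lt; lia.
Qed.

Lemma det_mx2 (R : comNzRingType) (M : 'M[R]_2) :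
  \det M = M 0 0 * M 1 1 - M 0 1 * M 1 0.
Proof.
rewrite (expand_det_row _ 0) !big_ord_recl big_ord0 addr0 /cofactor !det_mx11 !mxE /=.
rewrite (_ : lift (lift _ _) _ = 0 :> 'I_2); last exact: val_inj.
rewrite (_ : lift _ _ = 1 :> 'I_2); last exact: val_inj.
by rewrite expr0 expr1 mul1r mulN1r mulrN.
Qed.

Lemma pchar2_minor_neq0 (K : fieldType) (c0 c1 : K) e0 e1 :
  (2 \in [pchar K])%N -> c0 != 0 -> c1 != 0 -> c0 != c1 ->
  (e0 < 3)%N -> (e1 < 3)%N -> e0 != e1 ->
  c0 ^+ e0 * c1 ^+ e1 - c0 ^+ e1 * c1 ^+ e0 != 0.
Proof.
move=> K2 c0_neq0 c1_neq0 c01 e0_lt e1_lt e01.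
have c10 : c1 - c0 != 0 by rewrite subr_eq0 eq_sym.
have sqrB : c1 ^+ 2 - c0 ^+ 2 = (c1 - c0) ^+ 2.
  by rewrite -!(pFrobenius_autE K2) pFrobenius_autB_comm //; apply: mulrC.
have minor_lt e e' : (e < e')%N -> (e' < 3)%N -> c0 ^+ e * c1 ^+ e' - c0 ^+ e' * c1 ^+ e != 0.
  case: e e' => [|[|[|e]]] [|[|[|e']]] //= _ _.
  - by rewrite expr0 expr1 mul1r mulr1.
  - by rewrite expr0 mul1r mulr1 sqrB expf_neq0.
  - by rewrite (_ : _ - _ = c0 * c1 * (c1 - c0)) ?mulf_neq0 //; ring.
case: (ltngtP e0 e1) e01 => [lt_e|lt_e|->]; rewrite ?eqxx // => _; first exact: minor_lt.
by rewrite -oppr_eq0 opprB minor_lt.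
Qed.

Lemma unitmx_powers (K : fieldType) n (e : 'I_n -> 'I_n) (c : 'I_n -> K) :
  injective e -> injective c -> \matrix_(z, w) c w ^+ e z \in unitmx.
Proof.
move=> e_inj c_inj; apply/unitmx_kerP => v vM0.
pose P := \sum_z v 0 z *: ('X^(e z) : {poly K}).
have P0 : P = 0.
  apply: (poly_eq0_of_roots c_inj); first by apply: size_lincomb_leq => z; rewrite size_polyXn.
  move=> w; apply/eqP; rewrite /P horner_sum.
  transitivity ((v *m \matrix_(z, w) c w ^+ e z) 0 w); last by rewrite vM0 mxE.
  by rewrite mxE; apply: eq_bigr => z _; rewrite hornerZ hornerXn mxE.
apply/rowP => z; rewrite mxE; have := congr1 (fun p : {poly K} => p`_(e z)) P0.
rewrite coef0 coef_sum (bigD1 z) //= big1 ?addr0 => [|z' z'z].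
  by rewrite coefZ coefXn eqxx mulr1.
by rewrite coefZ coefXn (inj_eq val_inj) (inj_eq e_inj) eq_sym (negbTE z'z) mulr0.
Qed.

Lemma pchar2_powers_tn (K : fieldType) u (y : 'I_u -> K) :
  (2 \in [pchar K])%N -> injective y -> (forall k, y k != 0) ->
  totally_nonsingular (fun (i : 'I_3) k => y k ^+ i).
Proof.
move=> K2 y_inj y_neq0 n f g f_inj g_inj.
have := leq_card f f_inj; rewrite !card_ord.
case: n => [|[|[|[|//]]]] in f g f_inj g_inj * => _.
- by rewrite unitmxE det_mx00 unitr1.
- by rewrite unitmxE det_mx11 mxE unitfE expf_neq0.
- rewrite unitmxE det_mx2 !mxE unitfE [y (g 1) ^+ _ * _]mulrC.
  apply: pchar2_minor_neq0; rewrite ?ltn_ord //.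
    by rewrite (inj_eq y_inj) (inj_eq g_inj).
  by rewrite (inj_eq val_inj) (inj_eq f_inj).
- exact: (unitmx_powers f_inj (inj_comp y_inj g_inj)).
Qed.

Lemma exists_pchar2_tn (K : finFieldType) u :
  (2 \in [pchar K])%N -> (u < #|K|)%N -> exists a : 'I_3 -> 'I_u -> K, totally_nonsingular a.
Proof.
move=> K2 u_lt; pose nz := enum (predC1 (0 : K)).
have size_nz : size nz = #|K|.-1 by rewrite -cardE cardC1.
have k_lt (k : 'I_u) : (k < size nz)%N by rewrite size_nz; have := ltn_ord k; lia.
pose y (k : 'I_u) := nth 0 nz k.
exists (fun i k => y k ^+ i); apply: pchar2_powers_tn => // [k k' /eqP | k].
  by rewrite nth_uniq ?enum_uniq // => /eqP/ord_inj.
by have := mem_nth 0 (k_lt k); rewrite mem_enum.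
Qed.

Lemma finField_pchar2 (K : finFieldType) : ~~ odd #|K| -> (2 \in [pchar K])%N.
Proof.
have [p p_pr Kp] := finPcharP K; rewrite (card_pprimeChar Kp) oddX.
by case: (even_prime p_pr) => [<- // | ->]; rewrite ?orbT.
Qed.

Section RegularRepresentation.
Variables (F : fieldType) (L : fieldExtType F).
Import passmx.

Let e := vbasis {:L}.

Definition regular_mx (z : L) : 'M[F]_(\dim {:L}) := mxof e e (amulr z).

Lemma vecof_regular_mx w z : vecof e (w *m regular_mx z) = vecof e w * z.
Proof. by rewrite -hom_vecof ?vbasisP // lfunE. Qed.

Lemma regular_mx_unit z : z != 0 -> regular_mx z \in unitmx.
Proof.
move=> z_neq0; apply/unitmx_kerP => w /(congr1 (vecof e)).
rewrite vecof_regular_mx linear0 => /eqP.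
by rewrite mulf_eq0 (negbTE z_neq0) orbF vecof_eq0 ?vbasisP // => /eqP.
Qed.

Lemma block_regular_unitmx m m' (h : m' = m) (a : 'I_m -> 'I_m' -> L)
    (B : 'M[F]_(m * \dim {:L}, m' * \dim {:L})) :
  (forall v : 'I_m -> L, (forall c, \sum_x v x * a x c = 0) -> forall x, v x = 0) ->
  (forall x b c d, B (mxvec_index x b) (mxvec_index c d) = regular_mx (a x c) b d) ->
  castmx (erefl, congr1 (muln^~ \dim {:L}) h) B \in unitmx.
Proof.
subst m'; rewrite castmx_id => a_free BE; apply/unitmx_kerP => v vB0.
pose w x := \row_b v 0 (mxvec_index x b).
have w_ker c : \sum_x vecof e (w x) * a x c = 0.
  rewrite -[RHS](linear0 (vecof e)); under eq_bigr do rewrite -vecof_regular_mx.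
  rewrite -linear_sum; congr (vecof e _); apply/rowP => d.
  have := congr1 (fun M : 'rV_(m * _) => M 0 (mxvec_index c d)) vB0; rewrite !mxE => <-.
  rewrite summxE (reindex (uncurry (@mxvec_index m _))) /=; last exact: curry_mxvec_bij.
  under eq_bigr do rewrite mxE.
  rewrite pair_big; apply: eq_bigr => [[x b]] _ /=.
  by rewrite mxE BE.
apply/rowP => k; case/mxvec_indexP: k => x b.
have /eqP := a_free _ w_ker x; rewrite vecof_eq0 ?vbasisP // => /eqP/rowP/(_ b).
by rewrite !mxE.
Qed.

Lemma regular_block_tn r u (a : 'I_r -> 'I_u -> L) :
  totally_nonsingular a -> block_totally_nonsingular (fun i k => regular_mx (a i k)).
Proof.
move=> /totally_nonsingularP tn S S' h.
pose a' (x : 'I_#|S|) (c : 'I_#|S'|) := a (enum_val x) (enum_val c).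
apply: (@block_regular_unitmx _ _ h a') => [v v_ker|x b c d].
  apply: (tn _ enum_val (enum_val \o cast_ord (esym h))) => [||c]; last exact: v_ker.
    exact: enum_val_inj.
  exact: inj_comp enum_val_inj (@cast_ord_inj _ _ _).
by rewrite /block_sub mxE /mxvec_index !cast_ordK !enum_rankK.
Qed.

End RegularRepresentation.

Lemma card_finFieldExt (F : finFieldType) (L : fieldExtType F) :
  #|FinFieldExtType L| = (#|F| ^ \dim {:L})%N.
Proof.
have := @card_vspace _ _ _ {: finvect_type L}%VS.
by rewrite (@card_vspacef _ _ _ : #|{: finvect_type L}%VS| = _).
Qed.

(* The argument of [pPrimePowerField], with an arbitrary finite base field in place of ['F_p]. *)
Lemma finField_ext_exists (F : finFieldType) k :
  (0 < k)%N -> {L : splittingFieldType F | \dim {:L} = k}.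
Proof.
move=> k_gt0; have F_gt1 : (1 < #|F|)%N := finNzRing_gt1 F.
set m := (#|F| ^ k)%N; have m_gt1 : (1 < m)%N by rewrite (ltn_exp2l 0).
have m_gt0 := ltnW m_gt1; have m1_gt0 : (0 < m.-1)%N by rewrite -ltnS prednK.
pose q (R : nzRingType) : {poly R} := 'X^m - 'X.
have qE R : q R = ('X^(m.-1) - 1) * ('X - 0) by rewrite subr0 mulrBl mul1r -exprSr prednK.
have /FinSplittingFieldFor[/= L splitLq] : q F != 0.
  by rewrite qE monic_neq0 ?rpredM ?monicXsubC ?monicXnsubC.
rewrite [map_poly _ _]rmorphB rmorphXn /= map_polyX -/(q L) in splitLq.
exists L; have [zs qL defL] := splitLq.
have [p p_pr Fp] := finPcharP F; have Lp : p \in [pchar L] by rewrite pchar_lalg.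
have zs_uniq : uniq zs.
  rewrite -separable_prod_XsubC -(eqp_separable qL) qE separable_root andbC.
  rewrite /root !hornerE subr_eq0 eq_sym expr0n gtn_eqF ?oner_eq0 //=.
  rewrite cyclotomic.separable_Xn_sub_1 // -subn1 natrB // subr_eq0 natrX.
  move: (card_pprimeChar Fp) F_gt1; case: (logn _ _) => [|n] -> //= _.
  by rewrite natrX (pcharf0 Lp) expr0n /= expr0n gtn_eqF // eq_sym oner_eq0.
have /finField_galois_generator[/= a _ aE] : (1 <= {:L})%VS by apply: sub1v.
rewrite dimv1 expn1 in aE; pose Em := fixedSpace (a ^+ k)%g.
have zsE : zs =i Em.
  move=> z; rewrite -root_prod_XsubC -(eqp_root qL) (sameP fixedSpaceP eqP).
  rewrite /root !hornerE subr_eq0 /= /m; congr (_ == z).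
  elim: (k) => [|i IHi]; first by rewrite gal_id.
  by rewrite expgSr expnSr exprM IHi galM ?aE ?memvf.
have Lzs : (FinFieldExtType L) =i zs.
  suff fullE : Em = {:L}%VS by move=> z; rewrite zsE fullE memvf.
  apply/eqP; rewrite eqEsubv subvf -defL -[Em]subfield_closed agenvS //.
  by rewrite subv_add sub1v; apply/span_subvP => z; rewrite zsE.
apply: (expnI F_gt1); rewrite -card_finFieldExt (eq_card Lzs) (card_uniqP _) //.
apply: succn_inj; rewrite -(size_prod_XsubC _ id) -(eqp_size qL).
by rewrite size_polyDl size_polyXn // size_polyN size_polyX.
Qed.

Lemma exists_tn_array (K : finFieldType) r u : (0 < r)%N -> (0 < u)%N ->
  (if odd #|K| || (r \notin [:: 3; #|K| - 1]) then r + u - 1 <= #|K|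
   else r + u - 2 <= #|K|)%N ->
  exists a : 'I_r -> 'I_u -> K, totally_nonsingular a.
Proof.
move=> r_gt0 u_gt0; case: ifP => [_ le_ru | /norP[/finField_pchar2 K2]].
  by apply: exists_cauchy_tn => //; lia.
rewrite negbK !inE => /orP[/eqP r3 | /eqP rK] le_ru; subst r.
  by apply: exists_pchar2_tn => //; lia.
have K_gt1 := finNzRing_gt1 K.
have u_le3 : (u <= 3)%N by lia.
have [a a_tn] := @exists_pchar2_tn K (#|K| - 1) K2 ltac:(lia).
exists (fun i k => a (widen_ord u_le3 k) i).
apply: (totally_nonsingular_comp (h1 := id) _ _ (totally_nonsingular_tr a_tn)) => //.
by move=> k k' /(congr1 val) /= /ord_inj.
Qed.

Local Close Scope ring_scope.

Theorem mainTheorem14 (F : finFieldType) (s d t j : nat) :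
  0 < s -> 0 < d -> 0 < t -> d * t < s -> 0 < j ->
  (if odd (#|F| ^ j) || (s - d * t \notin [:: 3; #|F| ^ j - 1])
   then s - 1 <= #|F| ^ j
   else s - 2 <= #|F| ^ j) ->
  exists A : block_array F (s - d * t) (d * t) j,
    blocks_in_GL A /\ block_totally_nonsingular A.
Proof.
move=> s_gt0 d_gt0 t_gt0 dt_lt_s j_gt0 le_s.
have [L dimL] := finField_ext_exists F j_gt0.
have [a a_tn] : exists a : 'I_(s - d * t) -> 'I_(d * t) -> FinFieldExtType L,
    totally_nonsingular a.
  apply: exists_tn_array; rewrite ?subn_gt0 ?muln_gt0 ?d_gt0 //.
  by rewrite subnK ?card_finFieldExt ?dimL // ltnW.
subst j; exists (fun i k => regular_mx (a i k)); split; last exact: regular_block_tn.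
by move=> i k; apply/regular_mx_unit/(totally_nonsingular_neq0 _ _ a_tn).
Qed.
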